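(* Let $\mathcal{LC}$ be the local-causal polytope of conditional distributions $p(a_1a_2bc\mid x_1x_2yz)$ with all variables binary (defined in the context). If $p\in\mathcal{LC}$ then $$p(b=0, a_2=x_1 \mid y=0) + p(b=1, a_1=x_2 \mid y=0) + p(b\oplus c = yz\mid x_1=x_2=0) \leq \frac74,$$ and this bound is attained by some $p\in\mathcal{LC}$.
   Context: All settings $x_1,x_2,y,z$ and outcomes $a_1,a_2,b,c$ take values in $\{0,1\}$; $\oplus$ is addition mod 2. Let $\mathcal P$ be the set of all conditional probability distributions $p(a_1a_2bc\mid x_1x_2yz)$. For a set $S$ of outcome variables and a set $T$ of setting variables, write $S\perp_p T$ to mean that the marginal $\sum_{\text{outcomes not in }S} p(a_1a_2bc\mid x_1x_2yz)$ is, for every value of the outcomes in $S$ and of the settings not in $T$, independent of the values of the settings in $T$. Define $\mathcal{NS}=\{p\in\mathcal P: \{a_1,a_2,c\}\perp_p \{y\}\text{ and } \{b\}\perp_p\{x_1,x_2,z\}\}$; $\mathcal{LC}_1=\{p\in\mathcal{NS}: \{a_1,b\}\perp_p\{x_2\}\text{ and }\{a_1,a_2,b\}\perp_p\{z\}\}$; $\mathcal{LC}_2=\{p\in\mathcal{NS}: \{a_2,b\}\perp_p\{x_1\}\text{ and }\{a_1,a_2,b\}\perp_p\{z\}\}$; $\mathcal{LC}=\{\mu p_1+(1-\mu)p_2:\mu\in[0,1],\,p_1\in\mathcal{LC}_1,\,p_2\in\mathcal{LC}_2\}$. Shorthand (settings treated as uniformly and independently distributed): $p(b=0,a_2=x_1\mid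 y=0)=\frac18\sum_{x_1,x_2,z}p(b=0,a_2=x_1\mid x_1x_2,y=0,z)$; $p(b=1,a_1=x_2\mid y=0)=\frac18\sum_{x_1,x_2,z}p(b=1,a_1=x_2\mid x_1x_2,y=0,z)$; $p(b\oplus c=yz\mid x_1=x_2=0)=\frac14\sum_{y,z}p(b\oplus c=yz\mid x_1=x_2=0,y,z)$, where each event probability is the sum of $p(a_1a_2bc\mid x_1x_2yz)$ over outcomes satisfying the event. *)

From HB Require Import structures.
From mathcomp Require Import all_boot all_order all_algebra.
Set Implicit Arguments. Unset Strict Implicit. Unset Printing Implicit Defensive.
Import Order.TTheory GRing.Theory Num.Theory.
Local Open Scope ring_scope.

Definition V4 := {ffun 'I_4 -> bool}.

Definition i0 : 'I_4 := @Ordinal 4 0 isT.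
Definition i1 : 'I_4 := @Ordinal 4 1 isT.
Definition i2 : 'I_4 := @Ordinal 4 2 isT.
Definition i3 : 'I_4 := @Ordinal 4 3 isT.

Notation oA1 := i0. Notation oA2 := i1. Notation oB := i2. Notation oC := i3.
Notation sX1 := i0. Notation sX2 := i1. Notation sY := i2. Notation sZ := i3.

(* p o s = p(a1 a2 b c | x1 x2 y z) *)
Definition behav (R : realFieldType) := V4 -> V4 -> R.

Section Defs.
Variable R : realFieldType.

Definition is_cond_distr (p : behav R) : Prop :=
  (forall o s, 0 <= p o s) /\ (forall s, \sum_(o : V4) p o s = 1).

Definition marg (S : {set 'I_4}) (p : behav R) (o s : V4) : R :=
  \sum_(o' : V4 | [forall i in S, o' i == o i]) p o' s.

Definition indep (S T : {set 'I_4}) (p : behav R) : Prop :=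
  forall o s s' : V4, [forall i in ~: T, s i == s' i] ->
    marg S p o s = marg S p o s'.

Definition NS (p : behav R) : Prop :=
  is_cond_distr p /\
  indep [set oA1; oA2; oC] [set sY] p /\ indep [set oB] [set sX1; sX2; sZ] p.

Definition LC1 (p : behav R) : Prop :=
  NS p /\ indep [set oA1; oB] [set sX2] p /\ indep [set oA1; oA2; oB] [set sZ] p.

Definition LC2 (p : behav R) : Prop :=
  NS p /\ indep [set oA2; oB] [set sX1] p /\ indep [set oA1; oA2; oB] [set sZ] p.

Definition LC (p : behav R) : Prop :=
  exists (mu : R) (p1 p2 : behav R),
    [/\ 0 <= mu <= 1, LC1 p1, LC2 p2 &
        forall o s, p o s = mu * p1 o s + (1 - mu) * p2 o s].

(* p(b=0, a2=x1 | y=0) *)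
Definition term1 (p : behav R) : R :=
  8^-1 * \sum_(s : V4 | s sY == false)
           \sum_(o : V4 | (o oB == false) && (o oA2 == s sX1)) p o s.

(* p(b=1, a1=x2 | y=0) *)
Definition term2 (p : behav R) : R :=
  8^-1 * \sum_(s : V4 | s sY == false)
           \sum_(o : V4 | (o oB == true) && (o oA1 == s sX2)) p o s.

(* p(b xor c = yz | x1=x2=0) *)
Definition term3 (p : behav R) : R :=
  4^-1 * \sum_(s : V4 | (s sX1 == false) && (s sX2 == false))
           \sum_(o : V4 | (o oB (+) o oC) == (s sY && s sZ)) p o s.

Definition ineq_expr (p : behav R) : R := term1 p + term2 p + term3 p.

End Defs.

From HB Require Import structures.
From mathcomp Require Import all_boot all_order all_algebra.
From mathcomp Require Import ring lra.
Import Order.TTheory GRing.Theory Num.Theory.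
Set Implicit Arguments. Unset Strict Implicit. Unset Printing Implicit Defensive.
Local Open Scope ring_scope.

(* Write q for p(b = 1 | y = 0), which by no-signalling does not depend on
   x1, x2, z.  At x1 = x2 = 0 the CHSH value of (b, c) is at most
   3 + 2 min(q, 1 - q): each winning probability p(b = c xor yz) is at most
   1 - |p(b) - p(c xor yz)|, and the four marginal differences telescope.
   In LC1, {a1,b} _|_ x2 makes the second term exactly q/2 while the first is at
   most 1 - q; in LC2, {a2,b} _|_ x1 makes the first term exactly (1 - q)/2 while
   the second is at most q.  Either way the total is at most 7/4, and the bound
   passes to mixtures since the expression is linear.  Equality holds for the
   LC1 behaviour with a1 = 0, a2 = x1 and a PR box between b and c. *)

Section Sums.
Variables (R : realFieldType) (I : finType).

Lemma ler_sum_subpred (F : I -> R) (P Q : pred I) :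
  (forall i, 0 <= F i) -> (forall i, P i -> Q i) ->
  \sum_(i | P i) F i <= \sum_(i | Q i) F i.
Proof.
move=> F_ge0 sPQ; rewrite [leRHS](bigID P) /= (@eq_bigl _ _ _ _ _ _ P) => [|i].
  by rewrite lerDl sumr_ge0.
by apply/andP/idP => [[]|Pi] //; split => //; exact: sPQ.
Qed.

Lemma sum_predC (F : I -> R) (P : pred I) :
  \sum_i F i = 1 -> \sum_(i | ~~ P i) F i = 1 - \sum_(i | P i) F i.
Proof. by move=> <-; rewrite [in RHS](bigID P) /= addrAC subrr add0r. Qed.

Lemma sum_by_cells (b c : I -> bool) (Phi : bool -> bool -> bool) (F : I -> R) :
  \sum_(i | Phi (b i) (c i)) F i =
  \sum_(beta : bool) \sum_(gamma : bool)
     if Phi beta gamma then \sum_(i | (b i == beta) && (c i == gamma)) F i else 0.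
Proof.
rewrite (partition_big (fun i => (b i, c i)) (fun bc => Phi bc.1 bc.2)) //=.
rewrite big_mkcond [in RHS]pair_big /=; apply: eq_bigr => -[beta gamma] _ /=.
case: ifP => // Phi_bg; apply: eq_bigl => i; rewrite -xpair_eqE.
by case: eqP => [[-> ->]|]; rewrite ?andbT ?andbF.
Qed.

Lemma sum_agree_le (P : I -> R) (b d : I -> bool) :
  (forall i, 0 <= P i) -> \sum_i P i = 1 ->
  \sum_(i | b i == d i) P i <= 1 - `|\sum_(i | b i) P i - \sum_(i | d i) P i|.
Proof.
move=> P_ge0 P_sum1.
have cell_ge0 beta delta : 0 <= \sum_(i | (b i == beta) && (d i == delta)) P i.
  by apply: sumr_ge0 => i _.
move: P_sum1; rewrite (sum_by_cells b d (fun _ _ => true)).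
rewrite (sum_by_cells b d (fun beta delta => beta == delta)).
rewrite (sum_by_cells b d (fun beta _ => beta)) (sum_by_cells b d (fun _ delta => delta)).
rewrite !big_bool /= => sum1.
rewrite lerBrDl -lerBrDr; apply/ler_normlP.
have := cell_ge0 true false; have := cell_ge0 false true; split; lra.
Qed.

End Sums.

Definition chsh_sum (R : realFieldType) (O : finType)
    (P : bool -> bool -> O -> R) (b c : O -> bool) : R :=
  \sum_(y : bool) \sum_(z : bool) \sum_(o | b o (+) c o == y && z) P y z o.

Section CHSH.
Variables (R : realFieldType) (O : finType) (P : bool -> bool -> O -> R).
Variables (b c : O -> bool).
Hypothesis P_ge0 : forall y z o, 0 <= P y z o.
Hypothesis P_sum1 : forall y z, \sum_o P y z o = 1.
Hypothesis b_nosig : forall y, \sum_(o | b o) P y false o = \sum_(o | b o) P y true o.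
Hypothesis c_nosig : forall z, \sum_(o | c o) P false z o = \sum_(o | c o) P true z o.

Lemma chsh_sum_le :
  let q := \sum_(o | b o) P false false o in
  chsh_sum P b c <= 3 + 2 * q /\ chsh_sum P b c <= 5 - 2 * q.
Proof.
have agree_le y z k :
  let W := \sum_(o | b o (+) c o == k) P y z o in
  let D := \sum_(o | b o) P y z o - \sum_(o | c o (+) k) P y z o in
  W <= 1 - D /\ W <= 1 + D.
  rewrite /= (eq_bigl (fun o => b o == c o (+) k)); last first.
    by move=> o; case: (b o); case: (c o); case: k.
  move: (sum_agree_le b (fun o => c o (+) k) (P_ge0 y z) (P_sum1 y z)).
  by rewrite lerBrDl -lerBrDr => /ler_normlP[]; split; lra.
have not_c z : \sum_(o | c o (+) true) P true z o = 1 - \sum_(o | c o) P true z o.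
  by rewrite -sum_predC // (eq_bigl (fun o => ~~ c o)) // => o; rewrite addbT.
have c_addb0 y z : \sum_(o | c o (+) false) P y z o = \sum_(o | c o) P y z o.
  by apply: eq_bigl => o; rewrite addbF.
have [] := agree_le false false false; have [] := agree_le false true false.
have [] := agree_le true false false; have [] := agree_le true true true.
rewrite /= not_c !c_addb0 -!b_nosig -!c_nosig /chsh_sum !big_bool /=; lra.
Qed.

End CHSH.

Definition v4 (a b c d : bool) : V4 :=
  [ffun i : 'I_4 => match nat_of_ord i with 0 => a | 1 => b | 2 => c | _ => d end].

Lemma v4E a b c d :
  (v4 a b c d i0 = a) * (v4 a b c d i1 = b) * (v4 a b c d i2 = c) * (v4 a b c d i3 = d).
Proof. by rewrite !ffunE. Qed.

Lemma ord4_ind (P : 'I_4 -> Prop) : P i0 -> P i1 -> P i2 -> P i3 -> forall i, P i.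
Proof.
by move=> P0 P1 P2 P3 [[|[|[|[|n]]]] lt_i4] //;
  [move: P0 | move: P1 | move: P2 | move: P3]; congr P; apply: val_inj.
Qed.

Lemma v4_eta (s : V4) : s = v4 (s i0) (s i1) (s i2) (s i3).
Proof. by apply/ffunP; apply: ord4_ind; rewrite v4E. Qed.

Lemma forall_ord4 (P : pred 'I_4) : [forall i, P i] = [&& P i0, P i1, P i2 & P i3].
Proof.
apply/forallP/and4P => [P_all | [P0 P1 P2 P3]]; first by split; apply: P_all.
exact: ord4_ind.
Qed.

Section SumsV4.
Variable R : realFieldType.
Implicit Type F : V4 -> R.

Lemma sum_V4 F :
  \sum_(s : V4) F s =
  \sum_(a : bool) \sum_(b : bool) \sum_(c : bool) \sum_(d : bool) F (v4 a b c d).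
Proof.
rewrite !pair_bigA /= (reindex (fun t => v4 t.1.1.1 t.1.1.2 t.1.2 t.2)) //=.
exists (fun s : V4 => (s i0, s i1, s i2, s i3)) => [[[[a b] c] d]|s] _ /=.
  by rewrite !v4E.
by rewrite -v4_eta.
Qed.

Lemma sum_y0 F :
  \sum_(s : V4 | s sY == false) F s =
  \sum_(x1 : bool) \sum_(x2 : bool) \sum_(z : bool) F (v4 x1 x2 false z).
Proof. by rewrite big_mkcond sum_V4 !big_bool /= !v4E /=; lra. Qed.

Lemma sum_x0 F :
  \sum_(s : V4 | (s sX1 == false) && (s sX2 == false)) F s =
  \sum_(y : bool) \sum_(z : bool) F (v4 false false y z).
Proof. by rewrite big_mkcond sum_V4 !big_bool /= !v4E /=; lra. Qed.

End SumsV4.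

Definition restr (S : {set 'I_4}) (o : V4) : V4 := [ffun i => (i \in S) && o i].

Lemma restr_id S o : restr S (restr S o) = restr S o.
Proof. by apply/ffunP => i; rewrite !ffunE andbA andbb. Qed.

Lemma indep_sum (R : realFieldType) (p : behav R) S T (E : pred V4) (s s' : V4) :
  indep S T p -> (forall o, E (restr S o) = E o) ->
  [forall i in ~: T, s i == s' i] ->
  \sum_(o | E o) p o s = \sum_(o | E o) p o s'.
Proof.
move=> indepST E_restr agree_ss'.
rewrite [LHS](partition_big (restr S) E) => [|o]; last by rewrite E_restr.
rewrite [RHS](partition_big (restr S) E) => [|o]; last by rewrite E_restr.
apply: eq_bigr => v Ev; have [fixv | nfixv] := eqVneq (restr S v) v.
  have cellE t : \sum_(o | E o && (restr S o == v)) p o t = marg S p v t.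
    apply: eq_bigl => o; apply/andP/forallP => [[_ /eqP <-] i | agree_ov].
      by apply/implyP => iS; rewrite ffunE iS.
    have ov : restr S o = v.
      apply/ffunP => i; rewrite -fixv !ffunE.
      by case: (boolP (i \in S)) => // iS; apply/eqP/(implyP (agree_ov i)).
    by rewrite -E_restr ov Ev eqxx.
  by rewrite !cellE; apply: indepST.
have cell0 t : \sum_(o | E o && (restr S o == v)) p o t = 0.
  apply: big_pred0 => o; apply/andP => -[_ /eqP ov].
  by rewrite -ov restr_id eqxx in nfixv.
by rewrite !cell0.
Qed.

Lemma agree_at (T : {set 'I_4}) (s s' : V4) i :
  [forall j in ~: T, s j == s' j] -> i \notin T -> s i = s' i.
Proof. by move=> /forallP/(_ i) + iT; rewrite inE iT => /eqP. Qed.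

Lemma indep_settings (R : realFieldType) (p : behav R) S T :
  (forall o s s' : V4, [forall i in ~: T, s i == s' i] -> p o s = p o s') -> indep S T p.
Proof. by move=> p_T o s s' agree_ss'; apply: eq_bigr => o' _; apply: p_T. Qed.

Ltac agree_off := by apply/forallP; apply: ord4_ind; rewrite !inE /= ?v4E ?eqxx.
Ltac depends_on := by move=> o; rewrite !ffunE !inE /= ?eqxx.
Ltac eval_sum := rewrite big_mkcond sum_V4 !big_bool /= ?forall_ord4 ?inE /= !v4E.

Definition prob_b1 (R : realFieldType) (p : behav R) : R :=
  \sum_(o : V4 | o oB) p o (v4 false false false false).

Lemma avg8_le (R : realFieldType) (f : bool -> bool -> bool -> R) c :
  (forall x1 x2 z, f x1 x2 z <= c) ->
  8^-1 * \sum_x1 \sum_x2 \sum_z f x1 x2 z <= c.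
Proof.
move=> f_le; apply: le_trans (_ : 8^-1 * \sum_(x1 : bool) \sum_(x2 : bool) \sum_(z : bool) c <= c).
  rewrite ler_pM2l ?invr_gt0 ?ltr0n //.
  by apply: ler_sum => x1 _; apply: ler_sum => x2 _; apply: ler_sum => z _.
by rewrite !big_bool /=; lra.
Qed.

Section NoSignalling.
Variables (R : realFieldType) (p : behav R).
Hypothesis p_NS : NS p.

Lemma prob_b1E x1 x2 z : \sum_(o : V4 | o oB) p o (v4 x1 x2 false z) = prob_b1 p.
Proof. by case: p_NS => _ [_ indep_b]; apply: (indep_sum indep_b); [depends_on | agree_off]. Qed.

Lemma term1_le : term1 p <= 1 - prob_b1 p.
Proof.
case: p_NS => -[p_ge0 p_sum1] _.
rewrite /term1 sum_y0; apply: avg8_le => x1 x2 z.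
rewrite -(prob_b1E x1 x2 z) -sum_predC //.
by apply: ler_sum_subpred => // o /andP[/eqP ->].
Qed.

Lemma term2_le : term2 p <= prob_b1 p.
Proof.
case: p_NS => -[p_ge0 _] _.
rewrite /term2 sum_y0; apply: avg8_le => x1 x2 z.
by rewrite -(prob_b1E x1 x2 z); apply: ler_sum_subpred => // o /andP[/eqP ->].
Qed.

Lemma term3E :
  term3 p = 4^-1 * chsh_sum (fun y z o => p o (v4 false false y z)) (fun o => o oB) (fun o => o oC).
Proof.
rewrite /term3 sum_x0; congr (_ * _).
by apply: eq_bigr => y _; apply: eq_bigr => z _; rewrite !v4E.
Qed.

Lemma term3_le : term3 p <= 3 / 4 + prob_b1 p / 2 /\ term3 p <= 5 / 4 - prob_b1 p / 2.
Proof.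
case: p_NS => -[p_ge0 p_sum1] [indep_c indep_b].
have [] := @chsh_sum_le _ _ (fun y z o => p o (v4 false false y z)) (fun o => o oB) (fun o => o oC).
- by move=> *; apply: p_ge0.
- by move=> *; apply: p_sum1.
- by move=> y; apply: (indep_sum indep_b); [depends_on | agree_off].
- by move=> z; apply: (indep_sum indep_c); [depends_on | agree_off].
by rewrite term3E -/(prob_b1 p); split; lra.
Qed.

End NoSignalling.

Lemma term2_LC1 (R : realFieldType) (p : behav R) : LC1 p -> term2 p = prob_b1 p / 2.
Proof.
case=> p_NS [indep_a1b _].
have avg_x2 x1 z : \sum_x2 \sum_(o : V4 | (o oB == true) && (o oA1 == v4 x1 x2 false z sX2))
                    p o (v4 x1 x2 false z) = prob_b1 p.
  rewrite big_bool /= !v4E -(prob_b1E p_NS x1 false z) [RHS](bigID (fun o : V4 => o oA1)) /=.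
  rewrite (indep_sum (s' := v4 x1 false false z) indep_a1b); [|depends_on|agree_off].
  by congr (_ + _); apply: eq_bigl => o; case: (o oB); case: (o oA1).
rewrite /term2 sum_y0; transitivity (8^-1 * \sum_(x1 : bool) \sum_(z : bool) prob_b1 p).
  congr (_ * _); apply: eq_bigr => x1 _.
  by rewrite exchange_big; apply: eq_bigr => z _; exact: avg_x2.
by rewrite !big_bool /=; lra.
Qed.

Lemma term1_LC2 (R : realFieldType) (p : behav R) : LC2 p -> term1 p = (1 - prob_b1 p) / 2.
Proof.
case=> p_NS [indep_a2b _]; have [[_ p_sum1] _] := p_NS.
have avg_x1 x2 z : \sum_x1 \sum_(o : V4 | (o oB == false) && (o oA2 == v4 x1 x2 false z sX1))
                    p o (v4 x1 x2 false z) = 1 - prob_b1 p.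
  rewrite big_bool /= !v4E -(prob_b1E p_NS false x2 z) -sum_predC //.
  rewrite [RHS](bigID (fun o : V4 => o oA2)) /=.
  rewrite (indep_sum (s' := v4 false x2 false z) indep_a2b); [|depends_on|agree_off].
  by congr (_ + _); apply: eq_bigl => o; case: (o oB); case: (o oA2).
rewrite /term1 sum_y0; transitivity (8^-1 * \sum_(x2 : bool) \sum_(z : bool) (1 - prob_b1 p)).
  congr (_ * _); rewrite exchange_big; apply: eq_bigr => x2 _.
  by rewrite exchange_big; apply: eq_bigr => z _; exact: avg_x1.
by rewrite !big_bool /=; lra.
Qed.

Section Optimum.
Variable R : realFieldType.

Definition p_opt : behav R := fun o s =>
  if [&& ~~ o oA1, o oA2 == s sX1 & o oC == o oB (+) (s sY && s sZ)] then 2^-1 else 0.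

Lemma p_opt_distr : is_cond_distr p_opt.
Proof.
split=> [o s | s]; first by rewrite /p_opt; case: ifP; lra.
rewrite sum_V4 !big_bool /p_opt /= !v4E.
by case: (s sX1); case: (s sY && s sZ) => /=; lra.
Qed.

Lemma p_opt_marg_a1a2c o s :
  marg [set oA1; oA2; oC] p_opt o s = if ~~ o oA1 && (o oA2 == s sX1) then 2^-1 else 0.
Proof.
rewrite /marg; eval_sum; rewrite /p_opt /= !v4E.
by case: (o oA1); case: (o oA2); case: (o oC); case: (s sX1); case: (s sY && s sZ) => /=; lra.
Qed.

Lemma p_opt_marg_a1a2b o s :
  marg [set oA1; oA2; oB] p_opt o s = if ~~ o oA1 && (o oA2 == s sX1) then 2^-1 else 0.
Proof.
rewrite /marg; eval_sum; rewrite /p_opt /= !v4E.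
by case: (o oA1); case: (o oA2); case: (o oB); case: (s sX1); case: (s sY && s sZ) => /=; lra.
Qed.

Lemma p_opt_marg_b o s : marg [set oB] p_opt o s = 2^-1.
Proof.
rewrite /marg; eval_sum; rewrite /p_opt /= !v4E.
by case: (o oB); case: (s sX1); case: (s sY && s sZ) => /=; lra.
Qed.

Lemma p_opt_LC1 : LC1 p_opt.
Proof.
split; [split; [exact: p_opt_distr | split] | split].
- move=> o s s' agree_ss'; rewrite !p_opt_marg_a1a2c.
  by rewrite (agree_at agree_ss') // inE.
- by move=> o s s' _; rewrite !p_opt_marg_b.
- apply: indep_settings => o s s' agree_ss'; rewrite /p_opt.
  by rewrite !(agree_at agree_ss') // inE.
- move=> o s s' agree_ss'; rewrite !p_opt_marg_a1a2b.
  by rewrite (agree_at agree_ss') // inE.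
Qed.

Lemma p_opt_win1 (s : V4) :
  \sum_(o : V4 | (o oB == false) && (o oA2 == s sX1)) p_opt o s = 2^-1.
Proof.
eval_sum; rewrite /p_opt /= !v4E.
by case: (s sX1); case: (s sY && s sZ) => /=; lra.
Qed.

Lemma p_opt_win2 (s : V4) :
  \sum_(o : V4 | (o oB == true) && (o oA1 == s sX2)) p_opt o s = if s sX2 then 0 else 2^-1.
Proof.
eval_sum; rewrite /p_opt /= !v4E.
by case: (s sX1); case: (s sX2); case: (s sY && s sZ) => /=; lra.
Qed.

Lemma p_opt_win3 (s : V4) : \sum_(o : V4 | o oB (+) o oC == s sY && s sZ) p_opt o s = 1.
Proof.
eval_sum; rewrite /p_opt /= !v4E.
by case: (s sX1); case: (s sY && s sZ) => /=; lra.
Qed.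

Lemma p_opt_value : ineq_expr p_opt = 7%:R / 4%:R.
Proof.
rewrite /ineq_expr /term1 /term2 /term3.
rewrite (eq_bigr _ (fun s _ => p_opt_win1 s)) (eq_bigr _ (fun s _ => p_opt_win2 s)).
rewrite (eq_bigr _ (fun s _ => p_opt_win3 s)) !sum_y0 sum_x0 !big_bool /= !v4E /=; lra.
Qed.

End Optimum.

Lemma ineq_expr_LC1 (R : realFieldType) (p : behav R) : LC1 p -> ineq_expr p <= 7%:R / 4%:R.
Proof.
move=> p_LC1; have p_NS := p_LC1.1.
have := term1_le p_NS; have [term3_le1 _] := term3_le p_NS.
by rewrite /ineq_expr term2_LC1 //; lra.
Qed.

Lemma ineq_expr_LC2 (R : realFieldType) (p : behav R) : LC2 p -> ineq_expr p <= 7%:R / 4%:R.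
Proof.
move=> p_LC2; have p_NS := p_LC2.1.
have := term2_le p_NS; have [_ term3_le2] := term3_le p_NS.
by rewrite /ineq_expr term1_LC2 //; lra.
Qed.

Definition p_point (R : realFieldType) (o0 : V4) : behav R := fun o _ => (o == o0)%:R.

Lemma p_point_LC2 (R : realFieldType) o0 : LC2 (p_point R o0).
Proof.
have indep_ST S T : indep S T (p_point R o0) by apply: indep_settings.
split; [split; [split=> [o s | s] | by []] | by []].
  by rewrite ler0n.
by rewrite /p_point (bigD1 o0) //= eqxx big1 ?addr0 // => o /negbTE ->.
Qed.

Lemma ineq_expr_mix (R : realFieldType) (p p1 p2 : behav R) mu :
  (forall o s, p o s = mu * p1 o s + (1 - mu) * p2 o s) ->
  ineq_expr p = mu * ineq_expr p1 + (1 - mu) * ineq_expr p2.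
Proof.
move=> p_mix.
have sum2_mix (P : pred V4) (E : V4 -> pred V4) :
    \sum_(s | P s) \sum_(o | E s o) p o s =
    mu * \sum_(s | P s) \sum_(o | E s o) p1 o s + (1 - mu) * \sum_(s | P s) \sum_(o | E s o) p2 o s.
  rewrite !mulr_sumr -big_split; apply: eq_bigr => s _.
  by rewrite !mulr_sumr -big_split; apply: eq_bigr => o _; exact: p_mix.
by rewrite /ineq_expr /term1 /term2 /term3 !sum2_mix; ring.
Qed.

Theorem theorem1 (R : realFieldType) :
  (forall p : behav R, LC p -> ineq_expr p <= 7%:R / 4%:R) /\
  (exists p : behav R, LC p /\ ineq_expr p = 7%:R / 4%:R).
Proof.
split.
  move=> p [mu [p1 [p2 [/andP[mu_ge0 mu_le1] p1_LC1 p2_LC2 p_mix]]]].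
  rewrite (ineq_expr_mix p_mix).
  have := ineq_expr_LC1 p1_LC1; have := ineq_expr_LC2 p2_LC2.
  nra.
exists (p_opt R); split; last exact: p_opt_value.
exists 1, (p_opt R), (p_point R (v4 false false false false)); split.
- by rewrite ler01 lexx.
- exact: p_opt_LC1.
- exact: p_point_LC2.
- by move=> o s; rewrite mul1r subrr mul0r addr0.
Qed.
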